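(* Let $H=(V,E)$ be an $n$-vertex undirected multigraph without self-loops and with minimum degree at least $3$. Let $\gamma\ge 1$, let $\Sigma$ be a set, and suppose each edge $e\in E$ is assigned a set $w_e\subseteq\Sigma$ with $|w_e|\le\gamma$, such that every element of $\Sigma$ belongs to at most $\gamma$ of the sets $w_e$. Let $\beta=\lceil\log_{3/2}(12\gamma^2)\rceil$. Then there exist a subgraph $H_0=(V_0,E_0)$ of $H$ and a path decomposition $(B_i)_{i=1}^q$ of $H_0$ of width at most $4(\beta+3)$ such that: (a) $|E_0|=|V_0|+1$; (b) $|V_0|\le 4(\log_{3/2}n+2)$; (c) for every pair of edges $e_1,e_2\in E_0$ with $w_{e_1}\cap w_{e_2}\neq\emptyset$ there is an index $i$ such that all endpoints of $e_1$ and of $e_2$ lie in $B_i$; (d) for every edge $uv\in E_0$ the set of indices $\{i: u,v\in B_i\}$ is an interval.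
   Context: A path decomposition of a graph $G$ is a sequence of vertex subsets (bags) $B_1,\dots,B_q$ whose union is $V(G)$, such that every edge has both endpoints in some bag and, for each vertex $v$, the indices of bags containing $v$ form an interval; its width is the maximum bag size minus one. Parallel edges are allowed in $H$. *)

From mathcomp Require Import all_boot.
Set Implicit Arguments. Unset Strict Implicit. Unset Printing Implicit Defensive.

(* A multigraph without self-loops: vertex type V, edge type E (parallel edges
   allowed), each edge e has two distinct endpoints (ends e).1, (ends e).2. *)
Definition loopless (V E : finType) (ends : E -> V * V) : Prop :=
  forall e, (ends e).1 != (ends e).2.

Definition incident (V E : finType) (ends : E -> V * V) (v : V) (e : E) : bool :=
  ((ends e).1 == v) || ((ends e).2 == v).

Definition degree (V E : finType) (ends : E -> V * V) (v : V) : nat :=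
  #|[set e | incident ends v e]|.

Definition is_subgraph (V E : finType) (ends : E -> V * V)
    (V0 : {set V}) (E0 : {set E}) : Prop :=
  forall e, e \in E0 -> ((ends e).1 \in V0) && ((ends e).2 \in V0).

Definition indices_interval (V : finType) (B : seq {set V}) (S : {set V}) : Prop :=
  forall i j k, i <= j -> j <= k -> k < size B ->
    S \subset nth set0 B i -> S \subset nth set0 B k -> S \subset nth set0 B j.

Definition path_decomposition (V E : finType) (ends : E -> V * V)
    (V0 : {set V}) (E0 : {set E}) (B : seq {set V}) : Prop :=
  [/\ \bigcup_(b <- B) b = V0,
      (forall e, e \in E0 -> exists2 b, b \in B &
          ((ends e).1 \in b) && ((ends e).2 \in b)) &
      (forall v, v \in V0 -> indices_interval B [set v])].

Definition width_at_most (V : finType) (B : seq {set V}) (w : nat) : Prop :=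
  forall b, b \in B -> #|b| <= w.+1.

Definition edge_ends_set (V E : finType) (ends : E -> V * V) (e : E) : {set V} :=
  [set (ends e).1; (ends e).2].

From mathcomp Require Import all_boot zify.
Set Implicit Arguments. Unset Strict Implicit. Unset Printing Implicit Defensive.

(* Two edges conflict when their label sets w_e intersect.  The proof grows
   a breadth-first tree from a root r, level by level, in which an edge may
   be used at level t (as a tree edge, or as the "special" non-tree edge
   closing a cycle) only if it is good: it conflicts with no edge frozen at
   t, i.e. used at least beta + 1 levels earlier.
   - Construction of H0 (section BfsTrees): once two special edges exist,
     the tree paths from their four endpoints to r, plus the two edges, form
     H0 with |E0| = |V0| + 1; the windows of beta + 3 consecutive levels
     form its path decomposition, and goodness puts conflicting edges in a
     common window.
   - Growth (section Growth): as long as there is no second special edge, a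
     counting argument (minimum degree 3, at most gamma^2 conflicts per
     edge, the choice of beta) makes the tree grow by a factor 3/2 per
     level.  Hence level |V| is never reached, and when H0 is built at
     depth D we have (3/2)^(D-1) <= n, which gives bound (b). *)

(* (3/2)^K <= (3/2)^K' for K <= K', in cross-multiplied form. *)
Lemma pow32_mono K K' : K <= K' -> 3 ^ K * 2 ^ K' <= 3 ^ K' * 2 ^ K.
Proof.
move=> hK; rewrite -(subnKC hK) !expnD.
have h23 : 2 ^ (K' - K) <= 3 ^ (K' - K).
  by elim: (K' - K) => // n IH; rewrite !expnS leq_mul.
move: (3 ^ K) (2 ^ K) (2 ^ (K' - K)) (3 ^ (K' - K)) h23 => a b c e hce.
by rewrite mulnA [a * e * b]mulnAC; apply: leq_mul => //; apply: leq_mul.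
Qed.

Lemma pow32_ge12 b : 12 * 2 ^ b <= 3 ^ b -> 7 <= b.
Proof. by do 7 (case: b => [|b] //). Qed.

Lemma pow32_gt15 d : 7 <= d -> 15 * 2 ^ d < 3 ^ d.
Proof.
elim: d => // d IH; rewrite leq_eqVlt => /orP [/eqP <- // | hd].
have := IH hd; rewrite !expnS => IHd.
have : 2 * 2 ^ d <= 3 * 2 ^ d by rewrite leq_mul2r orbT.
lia.
Qed.

(* (3/2)^n > n for n > 0: a tree growing by a factor 3/2 per level
   exhausts n vertices in fewer than n levels. *)
Lemma pow32_gt_n n : 0 < n -> 2 ^ n * n < 3 ^ n.
Proof.
move=> n0; suff H : 9 * (2 ^ n * n) <= 8 * 3 ^ n.
  have : 0 < 3 ^ n by rewrite expn_gt0.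
  lia.
elim: n n0 => // [[|[|n]]] IH _ //.
have := IH isT; rewrite !expnS; move: (2 ^ n) (3 ^ n) => x y h; nia.
Qed.

(* Bound (b) of the theorem: K <= 4 (d + 2) and (3/2)^d <= n give
   (3/2)^K <= (3/2)^8 n^4. *)
Lemma pow32_size_bound K d n : K <= 4 * d.+2 -> 3 ^ d <= 2 ^ d * n ->
  3 ^ K * 2 ^ 8 <= 3 ^ 8 * 2 ^ K * n ^ 4.
Proof.
move=> hK hd.
have hK' : K <= d * 4 + 8 by lia.
have hm := pow32_mono hK'.
rewrite !expnD !expnM in hm.
have hq : (3 ^ d) ^ 4 <= (2 ^ d * n) ^ 4 by rewrite leq_exp2r.
rewrite expnMn in hq.
have hP : 0 < (2 ^ d) ^ 4 by rewrite !expn_gt0.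
move: hm hq hP; move: (3 ^ K) (2 ^ K) ((2 ^ d) ^ 4) ((3 ^ d) ^ 4) (n ^ 4).
move=> A B P Q N hm hq hP; rewrite -(leq_pmul2l hP).
have h2 : Q * (3 ^ 8 * B) <= P * N * (3 ^ 8 * B) by rewrite leq_mul2r hq orbT.
move: hm h2; rewrite !expnS expn0; nia.
Qed.

Lemma card_bigcup_le (T : finType) (I : Type) (l : seq I) (P : pred I)
    (F : I -> {set T}) :
  #|\bigcup_(i <- l | P i) F i| <= \sum_(i <- l | P i) #|F i|.
Proof.
apply: (big_rec2 (fun (X : {set T}) n => #|X| <= n)); first by rewrite cards0.
by move=> i X n _ H; apply: leq_trans (leq_card_setU _ _) _; rewrite leq_add2l.
Qed.

Lemma card_pairs_ge (T U : finType) (X : {set T * U}) (L : {set T}) k :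
  (forall v, v \in L -> k <= #|[set p in X | p.1 == v]|) -> #|L| * k <= #|X|.
Proof.
move=> H.
have -> : #|X| = \sum_(v : T) #|[set p in X | p.1 == v]|.
  rewrite -sum1_card (partition_big (fun p : T * U => p.1) predT) //=.
  by apply: eq_bigr => v _; rewrite -sum1_card; apply: eq_bigl => p; rewrite inE.
rewrite -sum_nat_const [X in _ <= X](bigID (fun v => v \in L)) /=.
by apply: leq_trans (leq_addr _ _); apply: leq_sum.
Qed.

Section Endpoints.
Variables (V E : finType) (ends : E -> V * V).

Definition other (e : E) (x : V) : V :=
  if (ends e).1 == x then (ends e).2 else (ends e).1.

Lemma incidentE x e : incident ends x e = (x \in edge_ends_set ends e).
Proof. by rewrite /incident /edge_ends_set !inE ![_ == x]eq_sym. Qed.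

Lemma inc_ends1 e : incident ends (ends e).1 e.
Proof. by rewrite /incident eqxx. Qed.

Lemma inc_ends2 e : incident ends (ends e).2 e.
Proof. by rewrite /incident eqxx orbT. Qed.

Lemma incident_ends y e : incident ends y e -> y = (ends e).1 \/ y = (ends e).2.
Proof. by case/orP => /eqP ->; [left | right]. Qed.

Lemma other_inc e x : incident ends x e -> incident ends (other e x) e.
Proof. by rewrite /incident /other; case: eqP => _; rewrite eqxx ?orbT. Qed.

Lemma card_incident_le2 (A : {set V}) f :
  {subset A <= [pred y | incident ends y f]} -> #|A| <= 2.
Proof.
move=> H; apply: leq_trans (_ : #|edge_ends_set ends f| <= 2).
  by apply: subset_leq_card; apply/subsetP => y /H; rewrite inE -incidentE.
by rewrite /edge_ends_set cardsU !cards1 leq_subr.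
Qed.

Hypothesis hloop : loopless ends.

Lemma other_invol e x : incident ends x e -> other e (other e x) = x.
Proof.
have hne := hloop e; rewrite /incident /other.
case/orP => /eqP <-; first by rewrite eqxx (negbTE hne).
by rewrite (negbTE hne) eqxx.
Qed.

Lemma incident_other e x y :
  incident ends x e -> incident ends y e -> x != y -> y = other e x.
Proof.
rewrite /incident /other => hx hy hxy; have hne := hloop e.
case/orP: hx hxy => /eqP <- hxy; case/orP: hy => /eqP hy; subst y;
  by rewrite ?eqxx ?(negbTE hne) in hxy *.
Qed.

End Endpoints.

Section BfsTrees.
Variables (V E : finType) (ends : E -> V * V) (Sigma : eqType) (w : E -> seq Sigma)
  (beta : nat) (r : V).

Definition conflict (e g : E) : bool := has (fun s => s \in w g) (w e).

Lemma conflict_sym e g : conflict e g = conflict g e.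
Proof. exact: has_sym. Qed.

(* A partial breadth-first tree rooted at r, explored up to depth [tlevel]:
   its vertex set, the depth and parent edge of each vertex, and possibly a
   "special" non-tree edge together with the level at which it was found. *)
Record bfs_state : Type := BfsState {
  tverts : {set V}; tdepth : V -> nat; tparent : V -> E;
  tspecial : option (E * nat); tlevel : nat }.

Definition parent_vertex st x := other ends (tparent st x) x.

Definition frozen st t g : bool :=
  [exists x in tverts st,
     (x != r) && (tdepth st x + beta.+1 <= t) && (tparent st x == g)] ||
  (if tspecial st is Some (f, d1) then (f == g) && (d1 + beta.+1 <= t) else false).

Definition good st t e : bool := [forall g, frozen st t g ==> ~~ conflict e g].

Lemma frozen_mono st t t' g : t <= t' -> frozen st t g -> frozen st t' g.
Proof.
move=> h /orP [/existsP [x /andP [hx /andP [/andP [h1 h2] h3]]] | h'].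
  by apply/orP; left; apply/existsP; exists x; rewrite hx h1 h3 (leq_trans h2 h).
apply/orP; right; move: h'; case: (tspecial st) => // [[f d1]] /andP [-> h2].
by rewrite (leq_trans h2 h).
Qed.

Lemma good_mono st t t' e : t <= t' -> good st t' e -> good st t e.
Proof.
move=> h /forallP H; apply/forallP => g; apply/implyP => hf.
by have := H g; rewrite (frozen_mono h hf).
Qed.

Definition bfs_tree_ok st D : Prop :=
  [/\ r \in tverts st, tdepth st r = 0,
   (forall x, x \in tverts st -> tdepth st x <= D),
   (forall x, x \in tverts st -> x != r ->
      [/\ incident ends x (tparent st x), parent_vertex st x \in tverts st &
          (tdepth st (parent_vertex st x)).+1 = tdepth st x]) &
   (forall x, x \in tverts st -> x != r ->
      good st (tdepth st x).-1 (tparent st x))].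

Definition special_ok st D f L : Prop :=
  [/\ L < D, good st L f,
   (forall y, incident ends y f ->
      y \in tverts st /\ L.-1 <= tdepth st y <= L.+1),
   (forall x, x \in tverts st -> x != r -> tparent st x != f) &
   (forall t, L.-1 + beta.+2 <= t -> t < D -> frozen st t f)].

Definition small_conflict_subgraph : Prop :=
  exists (V0 : {set V}) (E0 : {set E}) (B : seq {set V}),
    is_subgraph ends V0 E0 /\
        path_decomposition ends V0 E0 B /\
        width_at_most B (4 * (beta + 3)) /\
        #|E0| = #|V0| + 1 /\
        3 ^ #|V0| * 2 ^ 8 <= 3 ^ 8 * 2 ^ #|V0| * #|V| ^ 4 /\
        (forall e1 e2, e1 \in E0 -> e2 \in E0 ->
           has (fun s => s \in w e2) (w e1) ->
           exists2 b, b \in B &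
             (edge_ends_set ends e1 :|: edge_ends_set ends e2) \subset b) /\
        (forall e, e \in E0 -> indices_interval B (edge_ends_set ends e)).

Section TwoSpecialEdges.
Variables (st : bfs_state) (D : nat) (f1 f2 : E) (L1 L2 : nat).
Hypothesis hloop : loopless ends.
Hypotheses (htree : bfs_tree_ok st D) (hs1 : special_ok st D f1 L1)
  (hs2 : special_ok st D f2 L2) (hf12 : f1 != f2) (hD : 0 < D)
  (hn : 3 ^ D.-1 <= 2 ^ D.-1 * #|V|).

Local Notation S := (tverts st).
Local Notation dep := (tdepth st).
Local Notation par := (tparent st).

Lemma tree_root_depth : dep r = 0.
Proof. by case: htree. Qed.

Lemma tree_depth_le x : x \in S -> dep x <= D.
Proof. by case: htree => _ _ H _ _; apply: H. Qed.

Lemma tree_parent x : x \in S -> x != r ->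
  [/\ incident ends x (par x), parent_vertex st x \in S &
      (dep (parent_vertex st x)).+1 = dep x].
Proof. by case: htree => _ _ _ H _; apply: H. Qed.

Lemma tree_parent_good x : x \in S -> x != r -> good st (dep x).-1 (par x).
Proof. by case: htree => _ _ _ _ H; apply: H. Qed.

Lemma depth0_root x : x \in S -> dep x = 0 -> x = r.
Proof.
move=> hx h0; apply/eqP/negPn/negP => hr.
by have [_ _ h] := tree_parent hx hr; rewrite h0 in h.
Qed.

Lemma parent_inj x y : x \in S -> y \in S -> x != r -> y != r ->
  par x = par y -> x = y.
Proof.
move=> hx hy hxr hyr e; apply/eqP/negPn/negP => hxy.
have [ix _ dx] := tree_parent hx hxr; have [iy _ dy] := tree_parent hy hyr.
have e1 : y = parent_vertex st x by apply: (incident_other hloop ix); rewrite ?e.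
have e2 : x = parent_vertex st y.
  by apply: (incident_other hloop iy); rewrite -?e // eq_sym.
rewrite -e1 in dx; rewrite -e2 in dy; lia.
Qed.

Definition ancestor k x := iter k (parent_vertex st) x.

Lemma ancestor_depth t k : t \in S -> k <= dep t ->
  ancestor k t \in S /\ dep (ancestor k t) = dep t - k.
Proof.
move=> ht; elim: k => [|k IH] hk; first by rewrite subn0.
have [h1 h2] := IH (ltnW hk).
have hr : ancestor k t != r by apply/eqP => e; move: h2; rewrite e tree_root_depth; lia.
have [_ h3 h4] := tree_parent h1 hr.
by rewrite /ancestor iterS -/(ancestor k t); split=> //; lia.
Qed.

Lemma ancestor_top t : t \in S -> ancestor (dep t) t = r.
Proof.
move=> ht; have [h1 h2] := ancestor_depth ht (leqnn _).
by apply: depth0_root h1 _; lia.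
Qed.

Lemma special_in_tree f L y : special_ok st D f L -> incident ends y f -> y \in S.
Proof. by case=> _ _ H _ _ hy; case: (H y hy). Qed.

Lemma special_not_parent f L x : special_ok st D f L -> x \in S -> x != r ->
  par x != f.
Proof. by case=> _ _ _ H _; apply: H. Qed.

Definition tip (i : 'I_4) :=
  nth r [:: (ends f1).1; (ends f1).2; (ends f2).1; (ends f2).2] i.

Lemma tip_in_tree i : tip i \in S.
Proof.
case: i => [[|[|[|[|i]]]] hi] //=; rewrite /tip /=.
- exact: (special_in_tree hs1 (inc_ends1 _ _)).
- exact: (special_in_tree hs1 (inc_ends2 _ _)).
- exact: (special_in_tree hs2 (inc_ends1 _ _)).
- exact: (special_in_tree hs2 (inc_ends2 _ _)).
Qed.

Definition V0 : {set V} :=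
  [set x | [exists i : 'I_4, exists k : 'I_D.+1,
              (k <= dep (tip i)) && (ancestor k (tip i) == x)]].

Lemma V0_ancestor i k : k <= dep (tip i) -> ancestor k (tip i) \in V0.
Proof.
move=> hk; rewrite inE; apply/existsP; exists i; apply/existsP.
have hkD : k < D.+1 by rewrite ltnS (leq_trans hk) // tree_depth_le // tip_in_tree.
by exists (Ordinal hkD); rewrite /= hk eqxx.
Qed.

Lemma V0P x : x \in V0 -> exists i k, k <= dep (tip i) /\ ancestor k (tip i) = x.
Proof.
by rewrite inE => /existsP [i /existsP [k /andP [h1 /eqP h2]]]; exists i, k.
Qed.

Lemma V0_tree x : x \in V0 -> x \in S.
Proof. by case/V0P => i [k [hk <-]]; case: (ancestor_depth (tip_in_tree i) hk). Qed.

Lemma root_V0 : r \in V0.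
Proof. by rewrite -(ancestor_top (tip_in_tree ord0)); apply: V0_ancestor. Qed.

Lemma tip_V0 i : tip i \in V0.
Proof. exact: (V0_ancestor (k := 0)). Qed.

Lemma parent_V0 x : x \in V0 -> x != r -> parent_vertex st x \in V0.
Proof.
case/V0P => i [k [hk <-]] hr.
have hk' : k < dep (tip i).
  rewrite ltn_neqAle hk andbT; apply/eqP => e.
  by move: hr; rewrite e ancestor_top ?tip_in_tree ?eqxx.
by have := V0_ancestor hk'; rewrite /ancestor iterS.
Qed.

Lemma f1_ends_V0 y : incident ends y f1 -> y \in V0.
Proof.
by case/incident_ends => ->;
  [exact: (tip_V0 (@Ordinal 4 0 isT)) | exact: (tip_V0 (@Ordinal 4 1 isT))].
Qed.

Lemma f2_ends_V0 y : incident ends y f2 -> y \in V0.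
Proof.
by case/incident_ends => ->;
  [exact: (tip_V0 (@Ordinal 4 2 isT)) | exact: (tip_V0 (@Ordinal 4 3 isT))].
Qed.

(* V0 consists of four paths of at most D + 1 vertices each ... *)
Lemma card_V0 : #|V0| <= 4 * D.+1.
Proof.
apply: (@leq_trans #|[set ancestor p.2 (tip p.1) | p : 'I_4 * 'I_D.+1]|).
  apply: subset_leq_card; apply/subsetP => x; rewrite inE.
  case/existsP => i /existsP [k /andP [_ /eqP <-]].
  by apply/imsetP; exists (i, k).
by apply: leq_trans (leq_imset_card _ _) _; rewrite card_prod !card_ord.
Qed.

(* ... and each window of beta + 3 levels meets each path in at most
   beta + 3 vertices. *)
Definition window j : {set V} :=
  [set x in V0 | (j <= dep x) && (dep x <= j + beta.+2)].

Lemma in_window j x :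
  (x \in window j) = (x \in V0) && ((j <= dep x) && (dep x <= j + beta.+2)).
Proof. exact: in_set. Qed.

Lemma card_window j : #|window j| <= 4 * (beta + 3).
Proof.
apply: (@leq_trans
  #|[set ancestor (dep (tip p.1) - (j + p.2)) (tip p.1) | p : 'I_4 * 'I_(beta + 3)]|).
  apply: subset_leq_card; apply/subsetP => x.
  rewrite in_window => /andP [hx /andP [h1 h2]].
  case/V0P: hx => i [k [hk ex]].
  have [_ hdx] := ancestor_depth (tip_in_tree i) hk; rewrite ex in hdx.
  have hm : dep x - j < beta + 3 by lia.
  apply/imsetP; exists (i, Ordinal hm) => //=.
  by rewrite -{1}ex; congr ancestor; lia.
by apply: leq_trans (leq_imset_card _ _) _; rewrite card_prod !card_ord.
Qed.

Definition bags : seq {set V} := [seq window j | j <- iota 0 D.+1].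

Lemma size_bags : size bags = D.+1.
Proof. by rewrite size_map size_iota. Qed.

Lemma nth_bags j : j < D.+1 -> nth set0 bags j = window j.
Proof. by move=> hj; rewrite (nth_map 0) ?size_iota // nth_iota. Qed.

Lemma window_bags j : j <= D -> window j \in bags.
Proof. by move=> hj; apply: map_f; rewrite mem_iota. Qed.

Lemma bagsP b : b \in bags -> exists2 j, j <= D & b = window j.
Proof. by case/mapP => j; rewrite mem_iota add0n ltnS => hj ->; exists j. Qed.

(* A vertex of depth k lies exactly in the windows k - beta - 2 .. k. *)
Lemma vertex_interval v : v \in V0 -> indices_interval bags [set v].
Proof.
move=> hv i j k hij hjk hk; rewrite size_bags in hk.
rewrite !sub1set !nth_bags //; try (apply: leq_ltn_trans hk; lia).
rewrite !in_window hv /= => /andP [h1 h2] /andP [h3 h4].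
by apply/andP; split; [exact: leq_trans hjk h3 | apply: leq_trans h2 _; lia].
Qed.

Definition E0 : {set E} := par @: (V0 :\ r) :|: [set f1; f2].

(* (a): E0 is a spanning tree of V0 plus two extra edges. *)
Lemma card_E0 : #|E0| = #|V0| + 1.
Proof.
rewrite /E0 cardsU.
have -> : par @: (V0 :\ r) :&: [set f1; f2] = set0.
  apply/setP => e; rewrite in_setI in_set2 in_set0; apply/negP => /andP [/imsetP [x]].
  rewrite in_setD1 => /andP [hxr hx] -> /orP [] /eqP; apply/eqP.
  - exact: special_not_parent hs1 (V0_tree hx) hxr.
  - exact: special_not_parent hs2 (V0_tree hx) hxr.
rewrite cards0 subn0 cards2 hf12 card_in_imset.
  by rewrite (cardsD1 r V0) root_V0; lia.
move=> x y; rewrite !in_setD1 => /andP [hxr hx] /andP [hyr hy].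
exact: parent_inj (V0_tree hx) (V0_tree hy) hxr hyr.
Qed.

Definition span_lo e := if e == f1 then L1.-1 else if e == f2 then L2.-1
                        else minn (dep (ends e).1) (dep (ends e).2).
Definition span_hi e := if e == f1 then L1.+1 else if e == f2 then L2.+1
                        else maxn (dep (ends e).1) (dep (ends e).2).

Definition span_facts e : Prop :=
  [/\ (forall y, incident ends y e -> y \in V0 /\ span_lo e <= dep y <= span_hi e),
      span_hi e <= span_lo e + 2,
      (exists l, [/\ l < D, good st l e & span_hi e <= l.+1]) &
      (forall t, span_lo e + beta.+2 <= t -> t < D -> frozen st t e)].

Lemma parent_span_facts x : x \in V0 -> x != r -> span_facts (par x).
Proof.
move=> hx hxr; have hxS := V0_tree hx.
have [ix ipv dpv] := tree_parent hxS hxr.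
have hy y : incident ends y (par x) -> y \in V0 /\ (dep x).-1 <= dep y <= dep x.
  case: (eqVneq x y) => [<- | hxy] hyi; first by split=> //; lia.
  have -> : y = parent_vertex st x := incident_other hloop ix hyi hxy.
  by split; [exact: parent_V0 | lia].
have [_ h1] := hy _ (inc_ends1 ends (par x)).
have [_ h2] := hy _ (inc_ends2 ends (par x)).
have hdx : 0 < dep x <= D by rewrite -{1}dpv /= tree_depth_le.
rewrite /span_facts /span_lo /span_hi.
rewrite (negbTE (special_not_parent hs1 hxS hxr)) (negbTE (special_not_parent hs2 hxS hxr)).
split.
- move=> y hyi; have [hyV _] := hy y hyi; split=> //.
  by case/incident_ends: hyi => ->; rewrite ?(geq_minl, leq_maxl) ?(geq_minr, leq_maxr).
- lia.
- exists (dep x).-1; split; [lia | exact: tree_parent_good | lia].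
- move=> t ht _; apply/orP; left; apply/existsP; exists x.
  rewrite hxS hxr eqxx /= andbT; lia.
Qed.

Lemma special_span_facts f L : special_ok st D f L ->
  (forall y, incident ends y f -> y \in V0) ->
  span_lo f = L.-1 -> span_hi f = L.+1 -> span_facts f.
Proof.
case=> hL hg hy _ hfr hV hlo hhi; rewrite /span_facts hlo hhi; split=> //.
- by move=> y hyi; split; [exact: hV | case: (hy y hyi)].
- lia.
- by exists L; split.
Qed.

Lemma E0_span_facts e : e \in E0 -> span_facts e.
Proof.
rewrite /E0 in_setU in_set2 => /orP [/imsetP [x] | /orP [] /eqP ->].
- by rewrite in_setD1 => /andP [hxr hx] ->; apply: parent_span_facts.
- by apply: (special_span_facts hs1 f1_ends_V0); rewrite /span_lo /span_hi eqxx.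
- apply: (special_span_facts hs2 f2_ends_V0);
  by rewrite /span_lo /span_hi eq_sym (negbTE hf12) eqxx.
Qed.

Lemma E0_ends_V0 e y : e \in E0 -> incident ends y e -> y \in V0.
Proof. by move=> /E0_span_facts [H _ _ _] /H []. Qed.

Lemma span_lo_le e : e \in E0 -> span_lo e <= D.
Proof.
move=> /E0_span_facts [H _ _ _]; have [hyV /andP [h _]] := H _ (inc_ends1 ends e).
exact: leq_trans h (tree_depth_le (V0_tree hyV)).
Qed.

Lemma endpoint_window e j y : e \in E0 -> incident ends y e ->
  j <= span_lo e -> span_hi e <= j + beta.+2 -> y \in window j.
Proof.
move=> /E0_span_facts [H _ _ _] hy h1 h2; have [hyV /andP [h3 h4]] := H y hy.
by rewrite in_window hyV (leq_trans h1 h3) (leq_trans h4 h2).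
Qed.

(* The heart of (c): by goodness, two conflicting edges of E0 have spans
   less than beta + 2 levels apart. *)
Lemma conflict_span e1 e2 : e1 \in E0 -> e2 \in E0 -> conflict e1 e2 ->
  span_hi e1 <= span_lo e2 + beta.+2.
Proof.
move=> h1 h2 hc; rewrite leqNgt; apply/negP => hlt.
have [_ _ [l [hlD hg hl]] _] := E0_span_facts h1.
have [_ _ _ hfr] := E0_span_facts h2.
have hf : frozen st l e2 by apply: hfr => //; lia.
by move/forallP: hg => /(_ e2); rewrite hf hc.
Qed.

Lemma E0_path_decomposition : path_decomposition ends V0 E0 bags.
Proof.
split.
- apply/setP => x; rewrite bigcup_seq; apply/bigcupP/idP.
    by case=> b /bagsP [j _ ->]; rewrite in_window => /andP [].
  move=> hx; exists (window (dep x)); first exact: window_bags (tree_depth_le (V0_tree hx)).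
  by rewrite in_window hx leqnn leq_addr.
- move=> e he; exists (window (span_lo e)); first exact: window_bags (span_lo_le he).
  have [_ h _ _] := E0_span_facts he.
  have hspan : span_hi e <= span_lo e + beta.+2.
    by apply: leq_trans h _; rewrite leq_add2l.
  by rewrite !(endpoint_window he) ?inc_ends1 ?inc_ends2.
- exact: vertex_interval.
Qed.

Lemma conflict_common_bag e1 e2 : e1 \in E0 -> e2 \in E0 -> conflict e1 e2 ->
  exists2 b, b \in bags & (edge_ends_set ends e1 :|: edge_ends_set ends e2) \subset b.
Proof.
move=> h1 h2 hc.
have hb1 := conflict_span h1 h2 hc.
have hb2 := conflict_span h2 h1 (etrans (conflict_sym e2 e1) hc).
have [_ hl1 _ _] := E0_span_facts h1; have [_ hl2 _ _] := E0_span_facts h2.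
exists (window (minn (span_lo e1) (span_lo e2))).
  by apply: window_bags; apply: leq_trans (geq_minl _ _) (span_lo_le h1).
apply/subsetP => y; rewrite in_setU -!incidentE => /orP [] hy.
- apply: endpoint_window h1 hy (geq_minl _ _) _.
  by rewrite /minn; case: ifP => _ //; apply: leq_trans hl1 _; rewrite leq_add2l.
- apply: endpoint_window h2 hy (geq_minr _ _) _.
  by rewrite /minn; case: ifP => _ //; apply: leq_trans hl2 _; rewrite leq_add2l.
Qed.

Lemma edge_interval e : e \in E0 -> indices_interval bags (edge_ends_set ends e).
Proof.
move=> he i j k hij hjk hk; rewrite /edge_ends_set !subUset !sub1set.
move=> /andP [a1 a2] /andP [b1 b2].
have v1 := E0_ends_V0 he (inc_ends1 _ _); have v2 := E0_ends_V0 he (inc_ends2 _ _).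
have := vertex_interval v1 hij hjk hk; rewrite !sub1set => /(_ a1 b1) ->.
by have := vertex_interval v2 hij hjk hk; rewrite !sub1set => /(_ a2 b2) ->.
Qed.

Lemma two_specials_subgraph : small_conflict_subgraph.
Proof.
exists V0, E0, bags; split; [|split; [|split; [|split; [|split; [|split]]]]].
- by move=> e he; rewrite !(E0_ends_V0 he) ?inc_ends1 ?inc_ends2.
- exact: E0_path_decomposition.
- by move=> b /bagsP [j _ ->]; apply: leq_trans (card_window j) _.
- exact: card_E0.
- by move: card_V0 hn; case: D hD => // d _ hV hd; apply: pow32_size_bound hd.
- exact: conflict_common_bag.
- exact: edge_interval.
Qed.

End TwoSpecialEdges.
End BfsTrees.

(* Propagation of the potential inequality by one level (X = 3^(d-m),
   Y = 2^(d-m), T = |ball m|, a = |level d|, N = number of fresh vertices,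
   R, R' = old and new reserve). *)
Lemma potential_arith X Y T R R' a N :
  X * T + Y * R <= Y * (3 * a) -> 3 * a + R' <= 2 * N + R ->
  3 * X * T + 2 * Y * R' <= 2 * Y * (3 * N).
Proof.
move=> h1 h2.
have h3 : Y * (3 * a + R') <= Y * (2 * N + R) by rewrite leq_mul2l h2 orbT.
nia.
Qed.

(* Propagation of the growth inequality (3/2)^d <= |ball d| by one level. *)
Lemma growth_arith X Y T N : X <= Y * T -> T <= 2 * N -> 3 * X <= 2 * Y * (T + N).
Proof.
move=> h1 h2.
have h3 : Y * T <= Y * (2 * N) by rewrite leq_mul2l h2 orbT.
nia.
Qed.

(* The choice of beta makes the bad edges negligible: if the ball T of
   radius d - beta - 1 satisfies (3/2)^(beta+1) T <= 3a, where a is the size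
   of level d, and there are at most gamma^2 T bad edges, then reserve plus
   four times the bad edges stays below a. *)
Lemma bad_budget_arith a T Bd Rs g b d :
  12 * g ^ 2 * 2 ^ b <= 3 ^ b -> 0 < g -> b.+1 <= d ->
  3 ^ b.+1 * T <= 2 ^ b.+1 * (3 * a) -> Bd <= g ^ 2 * T ->
  3 ^ d <= 2 ^ d * (3 * a) -> Rs <= 2 -> Rs + 4 * Bd <= a.
Proof.
move=> hb hg hd h1 h2 h3 hR.
have b7 : 7 <= b.
  apply: pow32_ge12; apply: leq_trans hb; rewrite leq_mul2r; apply/orP; right.
  by rewrite -{1}(muln1 12) leq_mul2l expn_gt0 hg.
have ha : 6 <= a.
  rewrite leqNgt; apply/negP => ha.
  have := pow32_gt15 (leq_trans b7 (ltnW hd)); rewrite ltnNge => /negP; apply.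
  by apply: leq_trans h3 _; rewrite mulnC leq_mul2r; apply/orP; right; lia.
have key : 3 ^ b * (12 * (g ^ 2 * T)) <= 3 ^ b * (2 * a).
  have -> : 3 ^ b * (12 * (g ^ 2 * T)) = 4 * g ^ 2 * (3 ^ b.+1 * T).
    by rewrite (expnS 3 b); move: (3 ^ b) (g ^ 2) => P G; nia.
  apply: (@leq_trans (4 * g ^ 2 * (2 ^ b.+1 * (3 * a)))).
    by rewrite leq_mul2l h1 orbT.
  have -> : 4 * g ^ 2 * (2 ^ b.+1 * (3 * a)) = (12 * g ^ 2 * 2 ^ b) * (2 * a).
    by rewrite (expnS 2 b); move: (2 ^ b) (g ^ 2) => Q G; nia.
  by rewrite leq_mul2r hb orbT.
rewrite leq_pmul2l ?expn_gt0 // in key.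
have : 12 * Bd <= 12 * (g ^ 2 * T) by rewrite leq_mul2l h2.
lia.
Qed.

(* Starting from the root, the tree is extended level
   by level; at level d every vertex has at least two non-parent edges
   (minimum degree 3).  Those that are not good are few (at most gamma^2 per
   frozen edge, and frozen edges lie beta levels up, where the tree is much
   smaller); each good one either discovers a fresh vertex, or closes a
   cycle and becomes a special edge.  A second special edge yields H0;
   otherwise the potential inequality of [growth_inv] shows that
   the tree grows by a factor 3/2 per level, which is impossible for more
   than |V| levels. *)
Section Growth.
Variables (V E : finType) (ends : E -> V * V) (Sigma : eqType) (w : E -> seq Sigma)
  (gamma beta : nat) (r : V) (e0 : E).
(* e0 is an arbitrary edge, the default value in [fresh_parent]. *)
Hypothesis hloop : loopless ends.
Hypothesis hdeg : forall v, 3 <= degree ends v.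
Hypothesis hwe : forall e, size (undup (w e)) <= gamma.
Hypothesis hws : forall s : Sigma, #|[set e | s \in w e]| <= gamma.
Hypothesis hbeta : 12 * gamma ^ 2 * 2 ^ beta <= 3 ^ beta.
Hypothesis hgam : 1 <= gamma.

Local Notation bfs_state := (bfs_state V E).
Local Notation frozen := (frozen beta r).
Local Notation good := (good w beta r).
Local Notation parent_vertex := (parent_vertex ends).
Local Notation conflict := (conflict w).
Local Notation incident := (incident ends).
Local Notation other := (other ends).
Local Notation bfs_tree_ok := (bfs_tree_ok ends w beta r).
Local Notation special_ok := (special_ok ends w beta r).

Definition nonparent (st : bfs_state) v e := (v == r) || (e != tparent st v).

Definition level_set (st : bfs_state) k := [set x in tverts st | tdepth st x == k].
Definition ball (st : bfs_state) m := [set x in tverts st | tdepth st x <= m].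

(* Two minus the number of endpoints of the special edge strictly above the
   current level: the credit still needed to account for that edge. *)
Definition reserve (st : bfs_state) : nat :=
  if tspecial st is Some (f, _)
  then 2 - #|[set x in tverts st | incident x f & tdepth st x < tlevel st]|
  else 2.

Lemma in_level_set (st : bfs_state) k x :
  (x \in level_set st k) = (x \in tverts st) && (tdepth st x == k).
Proof. by rewrite /level_set inE. Qed.

Lemma in_ball (st : bfs_state) k x :
  (x \in ball st k) = (x \in tverts st) && (tdepth st x <= k).
Proof. by rewrite /ball inE. Qed.

Definition growth_inv (st : bfs_state) : Prop :=
 [/\ bfs_tree_ok st (tlevel st),
     (if tspecial st is Some (f, d1) then special_ok st (tlevel st) f d1 else True),
     (forall u e, u \in tverts st -> tdepth st u < tlevel st -> incident u e ->
        nonparent st u e -> good st (tdepth st u) e ->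
        other e u \in tverts st /\ tdepth st (other e u) <= (tdepth st u).+1),
     (forall m, m <= tlevel st ->
        3 ^ (tlevel st - m) * #|ball st m| + 2 ^ (tlevel st - m) * reserve st
          <= 2 ^ (tlevel st - m) * (3 * #|level_set st (tlevel st)|)) &
     3 ^ tlevel st <= 2 ^ tlevel st * #|ball st (tlevel st)|].

Lemma conflict_card g : #|[set e | conflict e g]| <= gamma ^ 2.
Proof.
apply: (@leq_trans #|\bigcup_(s <- undup (w g)) [set e | s \in w e]|).
  apply: subset_leq_card; apply/subsetP => e; rewrite inE => /hasP [s hs hsg].
  by rewrite (big_rem s) ?mem_undup //= in_setU inE hs.
apply: leq_trans (card_bigcup_le _ _ _) _.
apply: (@leq_trans (\sum_(s <- undup (w g)) gamma)); first exact: leq_sum.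
by rewrite big_const_seq count_predT iter_addn_0 (expnS gamma 1) expn1 leq_mul2l hwe orbT.
Qed.

Section Step.
Variables (st : bfs_state) (d : nat).
Hypotheses (hinv : growth_inv st) (hd : tlevel st = d).

Local Notation S := (tverts st).
Local Notation dep := (tdepth st).
Local Notation par := (tparent st).

Lemma inv_tree : bfs_tree_ok st d. Proof. by case: hinv; rewrite hd. Qed.
Lemma inv_root : r \in S. Proof. by case: inv_tree. Qed.
Lemma inv_root_depth : dep r = 0. Proof. by case: inv_tree. Qed.
Lemma inv_depth_le x : x \in S -> dep x <= d.
Proof. by case: inv_tree => _ _ H _ _; apply: H. Qed.
Lemma inv_parent x : x \in S -> x != r ->
  [/\ incident x (par x), parent_vertex st x \in S & (dep (parent_vertex st x)).+1 = dep x].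
Proof. by case: inv_tree => _ _ _ H _; apply: H. Qed.
Lemma inv_parent_good x : x \in S -> x != r -> good st (dep x).-1 (par x).
Proof. by case: inv_tree => _ _ _ _ H; apply: H. Qed.
Lemma inv_special : if tspecial st is Some (f, d1) then special_ok st d f d1 else True.
Proof. by case: hinv; rewrite hd. Qed.
Lemma inv_closed u e : u \in S -> dep u < d -> incident u e -> nonparent st u e ->
  good st (dep u) e -> other e u \in S /\ dep (other e u) <= (dep u).+1.
Proof. by case: hinv; rewrite hd => _ _ H _ _; apply: H. Qed.
Lemma inv_potential m : m <= d -> 3 ^ (d - m) * #|ball st m| + 2 ^ (d - m) * reserve st
                               <= 2 ^ (d - m) * (3 * #|level_set st d|).
Proof. by case: hinv; rewrite hd => _ _ _ H _; apply: H. Qed.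
Lemma inv_growth : 3 ^ d <= 2 ^ d * #|ball st d|.
Proof. by case: hinv; rewrite hd. Qed.

Definition out_pairs : {set V * E} :=
  [set p : V * E |
     (p.1 \in S) && (dep p.1 == d) && incident p.1 p.2 && nonparent st p.1 p.2].
Definition good_pairs : {set V * E} := out_pairs :&: [set p | good st d p.2].
Definition bad_pairs : {set V * E} := out_pairs :\: [set p | good st d p.2].
Definition target (p : V * E) := other p.2 p.1.

Definition fresh : {set V} :=
  [set x | (x \notin S) && [exists p in good_pairs, target p == x]].
Definition fresh_parent x :=
  odflt e0 [pick e | [exists v, ((v, e) \in good_pairs) && (other e v == x)]].
Definition next_verts := S :|: fresh.
Definition next_depth x := if x \in S then dep x else d.+1.
Definition next_parent x := if x \in S then par x else fresh_parent x.

(* The good pairs whose edge became a parent edge; the edges of the others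
   close cycles and are candidates for the special edge. *)
Definition chosen (p : V * E) := (target p \notin S) && (fresh_parent (target p) == p.2).
Definition unchosen_edges : {set E} :=
  [set e | [exists p in good_pairs, (p.2 == e) && ~~ chosen p]].

Definition next_special :=
  if tspecial st is Some _ then tspecial st
  else omap (fun f => (f, d)) [pick f in unchosen_edges].
Definition next_state : bfs_state :=
  BfsState next_verts next_depth next_parent next_special d.+1.

Lemma good_pairsP p : p \in good_pairs ->
  [/\ p.1 \in S, dep p.1 = d, incident p.1 p.2, nonparent st p.1 p.2 & good st d p.2].
Proof. by rewrite !inE => /andP [/andP [/andP [/andP [-> /eqP ->] ->] ->] ->]. Qed.

Lemma freshP x : x \in fresh ->
  x \notin S /\
  exists2 v, (v, fresh_parent x) \in good_pairs & other (fresh_parent x) v = x.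
Proof.
rewrite inE => /andP [hx /existsP [p /andP [hp /eqP ht]]]; split=> //.
rewrite /fresh_parent; case: pickP => [e /existsP [v /andP [hv /eqP hvx]] | H] /=.
  by exists v.
have := H p.2; move/negbT/existsPn/(_ p.1).
by rewrite -surjective_pairing hp /= -ht /target eqxx.
Qed.

Lemma next_verts_old x : x \in S -> x \in next_verts.
Proof. by rewrite inE => ->. Qed.

Lemma next_vertsP x : x \in next_verts -> x \in S \/ x \in fresh.
Proof. by rewrite inE => /orP. Qed.

Lemma next_depth_old x : x \in S -> next_depth x = dep x.
Proof. by rewrite /next_depth => ->. Qed.
Lemma next_parent_old x : x \in S -> next_parent x = par x.
Proof. by rewrite /next_parent => ->. Qed.
Lemma next_depth_fresh x : x \in fresh -> next_depth x = d.+1.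
Proof. by case/freshP => hx _; rewrite /next_depth (negbTE hx). Qed.
Lemma next_parent_fresh x : x \in fresh -> next_parent x = fresh_parent x.
Proof. by case/freshP => hx _; rewrite /next_parent (negbTE hx). Qed.

Lemma target_incident p : p \in good_pairs -> incident (target p) p.2.
Proof. by case/good_pairsP => _ _ hi _ _; exact: other_inc. Qed.

Lemma target_next p : p \in good_pairs -> target p \in next_verts.
Proof.
move=> hp; rewrite inE; case: (boolP (target p \in S)) => //= hn.
by rewrite inE hn /=; apply/existsP; exists p; rewrite hp eqxx.
Qed.

(* By breadth-first closure, the target of a good pair at level d that is
   already in the tree lies at depth at least d - 1. *)
Lemma target_depth_low p : p \in good_pairs -> target p \in S -> d.-1 <= dep (target p).
Proof.
move=> hp hu; case/good_pairsP: (hp) => h1 h2 h3 h4 h5.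
rewrite leqNgt; apply/negP => hlt.
have hinc : incident (target p) p.2 := target_incident hp.
have hdu : dep (target p) < d by lia.
have hnp : nonparent st (target p) p.2.
  rewrite /nonparent; case: eqP => //= /eqP hr; apply/eqP => he.
  have [_ _ hdp] := inv_parent hu hr.
  have : parent_vertex st (target p) = p.1.
    by rewrite /parent_vertex -he /target other_invol.
  move=> e; rewrite e h2 in hdp; lia.
have hg : good st (dep (target p)) p.2 by apply: good_mono h5; lia.
have [_ hle] := inv_closed hu hdu hinc hnp hg.
by move: hle; rewrite /target other_invol // -/(target p) h2; lia.
Qed.

Lemma next_frozen t g : t <= d -> frozen next_state t g = frozen st t g.
Proof.
move=> ht; rewrite /frozen /=; congr orb.
  apply/existsP/existsP => [[x] | [x]].
    case/andP => hx /andP [/andP [hr h1] h2].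
    have hxS : x \in S.
      case/next_vertsP: hx => // hN; rewrite next_depth_fresh // in h1; lia.
    by exists x; rewrite hxS hr -(next_depth_old hxS) h1 -(next_parent_old hxS) h2.
  case/andP => hx /andP [/andP [hr h1] h2].
  by exists x; rewrite next_verts_old // hr next_depth_old // h1 next_parent_old.
rewrite /next_special; case: (tspecial st) => // .
case: pickP => //= f _; apply/negbTE; rewrite negb_and; apply/orP; right; lia.
Qed.

Lemma next_good t e : t <= d -> good next_state t e = good st t e.
Proof.
move=> ht; apply: eq_forallb => g; by rewrite next_frozen.
Qed.

Lemma fresh_new x : x \in fresh -> x \notin S.
Proof. by case/freshP. Qed.

Lemma fresh_parent_incident x : x \in fresh -> incident x (fresh_parent x).
Proof.
case/freshP => _ [v hv hvx]; rewrite -{1}hvx; apply: other_inc; by case/good_pairsP: hv.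
Qed.

Lemma next_tree_ok : bfs_tree_ok next_state d.+1.
Proof.
split => /=.
- exact: next_verts_old inv_root.
- by rewrite next_depth_old ?inv_root // inv_root_depth.
- move=> x /next_vertsP [hx | hx].
    by rewrite next_depth_old // ltnW // ltnS inv_depth_le.
  by rewrite next_depth_fresh.
- move=> x /next_vertsP [hx | hx] hr.
    have [h1 h2 h3] := inv_parent hx hr.
    rewrite /parent_vertex /= next_parent_old // -/(parent_vertex st x).
    by rewrite h1 next_verts_old // !next_depth_old.
  case/freshP: (hx) => hxn [v hv hvx].
  have [hvS hvd hvi _ _] := good_pairsP hv.
  have ev : other (fresh_parent x) x = v.
    by rewrite -[X in other _ X]hvx other_invol.
  rewrite /parent_vertex /= next_parent_fresh // fresh_parent_incident // ev.
  by rewrite next_verts_old // next_depth_old // hvd next_depth_fresh.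
- move=> x /next_vertsP [hx | hx] hr /=.
    rewrite next_depth_old // next_parent_old // next_good ?inv_parent_good //.
    by have := inv_depth_le hx; lia.
  rewrite next_depth_fresh // next_parent_fresh // next_good //.
  by case/freshP: hx => _ [v hv _]; case/good_pairsP: hv.
Qed.

(* The edge of an unchosen good pair is the parent edge of no vertex: not
   of an old vertex (it was a non-parent edge at level d, and an old parent
   edge at v joins v to a shallower vertex), nor of a fresh one (the pair
   would then have been chosen). *)
Lemma unchosen_not_parent p x : p \in good_pairs -> ~~ chosen p ->
  x \in next_verts -> x != r -> next_parent x != p.2.
Proof.
move=> hp hnc; have [hvS hvd hvi hnp _] := good_pairsP hp.
case/next_vertsP => hx hr.
  rewrite next_parent_old //; apply/eqP => he.
  have [hxi _ hdx] := inv_parent hx hr.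
  case: (eqVneq p.1 x) => [ex | hne].
    by move: hnp; rewrite /nonparent ex (negbTE hr) he eqxx.
  have hvi' : incident p.1 (par x) by rewrite he.
  have hne' : x != p.1 by rewrite eq_sym.
  have ev : p.1 = parent_vertex st x := incident_other hloop hxi hvi' hne'.
  by rewrite -ev hvd in hdx; have := inv_depth_le hx; lia.
rewrite next_parent_fresh //; apply/eqP => he.
case/freshP: (hx) => hxn [v' hv' hv'x].
rewrite he in hv' hv'x.
have hv'i : incident v' p.2 by case/good_pairsP: hv'.
have hx_i : incident x p.2 by rewrite -hv'x other_inc.
have hne : x != p.1 by apply/eqP => ex; move: hxn; rewrite ex hvS.
have e1 : p.1 = other p.2 x := incident_other hloop hx_i hvi hne.
have e2 : p.1 = v' by rewrite e1 -hv'x other_invol.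
move: hnc; rewrite /chosen /target e2 hv'x hxn /=.
by rewrite -he eqxx.
Qed.

Lemma unchosen_special_ok e : e \in unchosen_edges -> special_ok next_state d.+1 e d.
Proof.
rewrite inE => /existsP [p /andP [hp /andP [/eqP hpe hnc]]].
have [hvS hvd hvi hnp hg] := good_pairsP hp.
rewrite -hpe; split => //=.
- by rewrite next_good.
- move=> y hy /=.
  case: (eqVneq p.1 y) => [<- | hne].
    by rewrite next_verts_old // next_depth_old // hvd; split=> //; lia.
  have ey : y = target p := incident_other hloop hvi hy hne.
  rewrite ey; split; first exact: target_next.
  case: (boolP (target p \in S)) => hu.
    rewrite next_depth_old //; have := target_depth_low hp hu; have := inv_depth_le hu; lia.
  by rewrite /next_depth (negbTE hu); lia.
- by move=> x hx hr; apply: unchosen_not_parent.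
- move=> t ht1 ht2; exfalso; lia.
Qed.

Lemma old_special_ok f d1 : tspecial st = Some (f, d1) -> special_ok next_state d.+1 f d1.
Proof.
move=> hsp; have := inv_special; rewrite hsp => -[h1 h2 h3 h4 h5].
split => //=.
- exact: ltnW.
- by rewrite next_good // ltnW.
- move=> y hy; have [hyS hyd] := h3 y hy; by rewrite next_verts_old // next_depth_old.
- move=> x /next_vertsP [hx | hx] hr; first by rewrite next_parent_old // h4.
  rewrite next_parent_fresh //; apply/eqP => he.
  have := fresh_parent_incident hx; rewrite he => /h3 [hxS _].
  by move: (fresh_new hx); rewrite hxS.
- move=> t ht _; have hsp' : next_special = Some (f, d1) by rewrite /next_special hsp.
  apply/orP; right; rewrite /= hsp' eqxx /=; lia.
Qed.

Lemma growth_bound_n : 3 ^ d <= 2 ^ d * #|V|.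
Proof. by apply: leq_trans inv_growth _; rewrite leq_mul2l max_card orbT. Qed.

Definition at_most_one_special : bool :=
  [forall e in unchosen_edges, if next_special is Some (f, _) then e == f else false].

Lemma two_specials_extract :
  ~~ at_most_one_special -> small_conflict_subgraph ends w beta.
Proof.
move/forallPn => [e]; rewrite negb_imply => /andP [he hne].
case hsp : (tspecial st) => [[f1 d1]|].
  have hsp' : next_special = Some (f1, d1) by rewrite /next_special hsp.
  rewrite hsp' in hne.
  apply: (two_specials_subgraph hloop next_tree_ok (old_special_ok hsp)
            (unchosen_special_ok he) _ _ growth_bound_n) => //.
  by rewrite eq_sym.
have hsp' : next_special = omap (fun f => (f, d)) [pick f in unchosen_edges].
  by rewrite /next_special hsp.
move: hsp' hne; case: pickP => [f hf | H] /= ->; last by rewrite H in he.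
move=> hne.
apply: (two_specials_subgraph hloop next_tree_ok (unchosen_special_ok hf)
          (unchosen_special_ok he) _ _ growth_bound_n) => //.
by rewrite eq_sym.
Qed.

(* Counting the pairs at level d.  First, minimum degree 3 gives every
   vertex of level d at least two non-parent edges. *)
Lemma out_pairs_lower : #|level_set st d| * 2 <= #|out_pairs|.
Proof.
apply: card_pairs_ge => v; rewrite inE => /andP [hv /eqP hvd].
set A := [set e | incident v e] :\ par v.
have hA : 2 <= #|A|.
  have := hdeg v; rewrite /degree (cardsD1 (par v)) /A.
  case: (par v \in _) => /=; lia.
apply: leq_trans hA _.
have pinj : injective (fun e : E => (v, e)) by move=> a b [].
rewrite -(card_imset _ pinj).
apply: subset_leq_card; apply/subsetP => p /imsetP [e]; rewrite !inE => /andP [hne hi] ->.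
by rewrite /= hv hvd eqxx hi /nonparent hne orbT eqxx.
Qed.

Lemma out_pairs_split : #|out_pairs| = #|good_pairs| + #|bad_pairs|.
Proof. by rewrite /good_pairs /bad_pairs cardsID. Qed.

Definition bad_edges : {set E} := [set e | ~~ good st d e].
Definition frozen_edges : {set E} := [set g | frozen st d g].

Lemma bad_pairs_le : #|bad_pairs| <= 2 * #|bad_edges|.
Proof.
apply: (@leq_trans #|[set ((ends e).1, e) | e in bad_edges] :|:
                     [set ((ends e).2, e) | e in bad_edges]|).
  apply: subset_leq_card; apply/subsetP => p; rewrite !inE => /andP [hg].
  case/andP => /andP [/andP [_ _] hi] _.
  have hb : p.2 \in bad_edges by rewrite inE hg.
  case/orP: hi => /eqP hi; apply/orP; [left|right]; apply/imsetP; exists p.2 => //;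
    by rewrite hi -surjective_pairing.
apply: leq_trans (leq_card_setU _ _) _.
by rewrite mul2n -addnn leq_add // leq_imset_card.
Qed.

Lemma bad_edges_le : #|bad_edges| <= gamma ^ 2 * #|frozen_edges|.
Proof.
apply: (@leq_trans #|\bigcup_(g in frozen_edges) [set e | conflict e g]|).
  apply: subset_leq_card; apply/subsetP => e; rewrite inE => /forallPn [g].
  rewrite negb_imply negbK => /andP [hf hc]; apply/bigcupP; exists g; by rewrite inE.
apply: leq_trans (card_bigcup_le _ _ _) _.
rewrite mulnC -sum_nat_const; apply: leq_sum => g _; exact: conflict_card.
Qed.

(* Frozen edges are parent edges of non-root vertices in the ball of radius
   d - beta - 1, plus possibly the special edge: there are at most as many
   as vertices in that ball. *)
Lemma frozen_edges_le :
  #|frozen_edges| <= (if beta.+1 <= d then #|ball st (d - beta.+1)| else 0).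
Proof.
set m := d - beta.+1.
set A := [set x in S | (x != r) && (dep x + beta.+1 <= d)].
set Bsp : {set E} := if tspecial st is Some (f, d1)
  then (if d1 + beta.+1 <= d then [set f] else set0) else set0.
have frozen_sub : frozen_edges \subset par @: A :|: Bsp.
  apply/subsetP => g; rewrite inE.
  case/orP => [/existsP [x /andP [hx /andP [/andP [hr h] /eqP <-]]] | hs].
    by rewrite in_setU; apply/orP; left; apply/imsetP; exists x => //; rewrite inE hx hr h.
  rewrite in_setU; apply/orP; right; move: hs; rewrite /Bsp.
  case: (tspecial st) => // [[f d1]].
  by case/andP => /eqP -> ->; rewrite inE.
have card_special : #|Bsp| <= (if beta.+1 <= d then 1 else 0).
  rewrite /Bsp; case: (tspecial st) => [[f d1]|]; last by rewrite cards0.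
  case: ifP => h; last by rewrite cards0.
  rewrite cards1; case: ifP => //; lia.
have card_frozen_parents :
  #|A| + (beta.+1 <= d) <= (if beta.+1 <= d then #|ball st m| else 0).
  case: ifP => hb.
    have hsub : r |: A \subset ball st m.
      apply/subsetP => x; rewrite !inE => /orP [/eqP -> | /andP [hx /andP [_ h]]].
        by rewrite inv_root inv_root_depth.
      rewrite hx /=; rewrite /m; lia.
    have := subset_leq_card hsub; rewrite cardsU1.
    have -> : r \notin A by rewrite inE eqxx andbF.
    by rewrite addnC.
  have -> : A = set0.
    apply/setP => x; rewrite !inE; apply/negP => /andP [_ /andP [_ h]]; move/negbT: hb; lia.
  by rewrite cards0.
apply: leq_trans (subset_leq_card frozen_sub) _.
apply: leq_trans (leq_card_setU _ _) _.
apply: leq_trans (leq_add (leq_imset_card _ _) card_special) _.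
by move: card_frozen_parents; case: ifP.
Qed.

Definition chosen_pairs : {set V * E} := good_pairs :&: [set p | chosen p].
Definition unchosen_pairs : {set V * E} := good_pairs :\: [set p | chosen p].

(* Chosen pairs are in bijection with fresh vertices (through [target]). *)
Lemma good_pairs_split : #|good_pairs| = #|chosen_pairs| + #|unchosen_pairs|.
Proof. by rewrite /chosen_pairs /unchosen_pairs cardsID. Qed.

Lemma chosen_pairs_le : #|chosen_pairs| <= #|fresh|.
Proof.
have hinj : {in chosen_pairs &, injective target}.
  move=> p q /setIP [hp hpc] /setIP [hq hqc] e.
  have hpc' : chosen p by move: hpc; rewrite inE.
  have hqc' : chosen q by move: hqc; rewrite inE.
  move: hpc' hqc' {hpc hqc}; rewrite /chosen => /andP [_ /eqP hpc] /andP [_ /eqP hqc].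
  have e2 : p.2 = q.2 by rewrite -hpc -hqc e.
  have hpi : incident p.1 p.2 by case/good_pairsP: hp.
  have hqi : incident q.1 q.2 by case/good_pairsP: hq.
  have e1 : p.1 = q.1.
    rewrite -(other_invol hloop hpi) -(other_invol hloop hqi).
    by rewrite -/(target p) -/(target q) e e2.
  by case: p q e1 e2 {hp hq hpc hqc e hpi hqi} => [a b] [a' b'] /= -> ->.
rewrite -(card_in_imset hinj); apply: subset_leq_card; apply/subsetP => x /imsetP [p].
case/setIP => hp; rewrite inE => /andP [hn _] ->.
by rewrite inE hn /=; apply/existsP; exists p; rewrite hp eqxx.
Qed.

Lemma unchosen_pair_edge p : p \in unchosen_pairs -> p.2 \in unchosen_edges.
Proof.
case/setDP => hp hc; rewrite inE; apply/existsP; exists p.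
by rewrite hp eqxx; rewrite inE in hc.
Qed.

Lemma next_level_top : level_set next_state d.+1 = fresh.
Proof.
apply/setP => x; rewrite in_level_set /= in_setU.
case: (boolP (x \in S)) => hx /=.
  have hn : x \notin fresh by apply/negP => /fresh_new; rewrite hx.
  rewrite next_depth_old //; have := inv_depth_le hx.
  rewrite (negbTE hn); case: eqP => //; lia.
by rewrite /next_depth (negbTE hx) eqxx andbT.
Qed.

Lemma next_ball_old m : m <= d -> ball next_state m = ball st m.
Proof.
move=> hm; apply/setP => x; rewrite !in_ball /= in_setU.
case: (boolP (x \in S)) => hx /=; first by rewrite next_depth_old.
rewrite /next_depth (negbTE hx); apply/negP => /andP [_ h]; lia.
Qed.

Lemma next_ball_top : #|ball next_state d.+1| = #|ball st d| + #|fresh|.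
Proof.
have -> : ball next_state d.+1 = next_verts.
  apply/setP => x; rewrite in_ball /=; case: (boolP (x \in next_verts)) => //= hx.
  case/next_vertsP: hx => hx.
    by rewrite next_depth_old // (leq_trans (inv_depth_le hx)).
  by rewrite next_depth_fresh // leqnn.
have -> : ball st d = S.
  apply/setP => x; rewrite in_ball.
  by case: (boolP (x \in S)) => // hx; rewrite inv_depth_le.
rewrite /next_verts cardsU.
have -> : S :&: fresh = set0.
  apply/setP => x; rewrite in_setI in_set0.
  by apply/negP => /andP [hx /fresh_new]; rewrite hx.
by rewrite cards0 subn0.
Qed.

Definition special_top f : {set V} := [set y in S | incident y f & dep y == d].
Definition special_below f : {set V} := [set y in S | incident y f & dep y < d].

Section OneSpecial.
Hypothesis one_special : at_most_one_special.

(* Unchosen pairs then all carry the special edge, so they are at most its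
   endpoints at level d. *)
Lemma unchosen_pairs_le :
  if next_special is Some (f, _) then #|unchosen_pairs| <= #|special_top f|
  else #|unchosen_pairs| == 0.
Proof.
case hsp : next_special => [[f d1]|].
  apply: (@leq_trans #|[set (y, f) | y in special_top f]|); last exact: leq_imset_card.
  apply: subset_leq_card; apply/subsetP => p hp.
  have := forallP one_special p.2; rewrite (unchosen_pair_edge hp) hsp /= => /eqP e.
  move: hp; case/setDP => hp _; have [h1 h2 h3 _ _] := good_pairsP hp.
  apply/imsetP; exists p.1; first by rewrite inE h1 -e h3 h2 eqxx.
  by rewrite -e -surjective_pairing.
rewrite cards_eq0; apply/eqP/setP => p; rewrite in_set0; apply/negbTE/negP => hp.
by have := forallP one_special p.2; rewrite (unchosen_pair_edge hp) hsp.
Qed.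

Lemma reserve_update : #|unchosen_pairs| + reserve next_state <= reserve st /\
  #|unchosen_pairs| <= #|level_set st d| /\ #|unchosen_pairs| <= 2.
Proof.
have RB := unchosen_pairs_le.
case hsp : next_special RB => [[f d1]|] hR; last first.
  have h1 : reserve next_state = 2 by rewrite /reserve /= hsp.
  have h2 : reserve st = 2.
    by move: hsp; rewrite /reserve /next_special; case: (tspecial st).
  rewrite (eqP hR) h1 h2; split=> //.
set Z' := [set x in next_verts | incident x f & next_depth x < d.+1].
have hY : #|special_top f| <= #|level_set st d|.
  by apply: subset_leq_card; apply/subsetP => y; rewrite !inE => /andP [-> /andP [_ ->]].
have hY2 : #|special_top f| <= 2.
  apply: (card_incident_le2 (ends := ends) (f := f)) => y.
  by rewrite !inE => /andP [_ /andP [? _]].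
have hZ2 : #|Z'| <= 2.
  apply: (card_incident_le2 (ends := ends) (f := f)) => y.
  by rewrite !inE => /andP [_ /andP [? _]].
have hZY : #|special_top f| + #|special_below f| <= #|Z'|.
  have hdis : special_top f :&: special_below f = set0.
    apply/setP => y; rewrite !inE; apply/negP.
    case/andP => /andP [_ /andP [_ /eqP ->]] /andP [_ /andP [_]].
    by rewrite ltnn.
  have := cardsU (special_top f) (special_below f); rewrite hdis cards0 subn0 => <-.
  apply: subset_leq_card; apply/subsetP => y; rewrite in_setU !inE.
  case/orP => /andP [hy /andP [hi hdy]]; rewrite hy /= hi /= next_depth_old //.
    by rewrite (eqP hdy).
  exact: ltnW.
have hRb' : reserve next_state = 2 - #|Z'| by rewrite /reserve /= hsp.
have hRb : reserve st = 2 - #|special_below f| \/ reserve st = 2.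
  move: hsp; rewrite /reserve /next_special.
  case: (tspecial st) => [[f' d']|] /=; last by right.
  by move=> [-> _]; left; rewrite hd.
rewrite hRb'; split; last by split; lia.
case: hRb => ->; lia.
Qed.

Lemma level_expansion :
  3 * #|level_set st d| + reserve next_state <= 2 * #|fresh| + reserve st.
Proof.
have out_lb := out_pairs_lower; have out_sp := out_pairs_split.
have good_sp := good_pairs_split; have chosen_le := chosen_pairs_le.
have bad_pairs_lb := bad_pairs_le; have [res_dec [unch_lev unch2]] := reserve_update.
suff bad_small : #|unchosen_pairs| + 4 * #|bad_edges| <= #|level_set st d| by lia.
have bad_le := bad_edges_le; have frozen_le := frozen_edges_le.
case: (posnP #|bad_edges|) => hB; first by rewrite hB muln0 addn0.
have hbd : beta.+1 <= d.
  case: ifP frozen_le => // _; rewrite leqn0 => /eqP hF.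
  by move: bad_le; rewrite hF muln0; lia.
rewrite hbd in frozen_le.
apply: (bad_budget_arith (T := #|ball st (d - beta.+1)|) (g := gamma) (b := beta) (d := d))
  => //.
- by have := inv_potential (leq_subr (beta.+1) d); rewrite subKn //; lia.
- by apply: leq_trans bad_le _; rewrite leq_mul2l frozen_le orbT.
- have := inv_potential (leq0n d); rewrite subn0.
  have : 0 < #|ball st 0|.
    by apply/card_gt0P; exists r; rewrite inE inv_root inv_root_depth.
  nia.
Qed.

(* Breadth-first closure for the next state: at level d it holds because
   every good pair has its target in the next tree. *)
Lemma next_closed u e : u \in next_verts -> next_depth u < d.+1 -> incident u e ->
  nonparent next_state u e -> good next_state (next_depth u) e ->
  other e u \in next_verts /\ next_depth (other e u) <= (next_depth u).+1.
Proof.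
case/next_vertsP => hu; last by rewrite next_depth_fresh // ltnn.
rewrite next_depth_old // => hdu hi; rewrite /nonparent /= next_parent_old // => hnp.
rewrite next_good; last by rewrite -ltnS.
move=> hg; case: (ltngtP (dep u) d) => hud.
- have [h1 h2] := inv_closed hu hud hi hnp hg.
  by rewrite next_verts_old // next_depth_old.
- by have := inv_depth_le hu; lia.
- have hp : (u, e) \in good_pairs.
    apply/setIP; split; last by rewrite inE /= -hud.
    by rewrite inE /= hu hud eqxx hi /nonparent hnp.
  split; first exact: (target_next hp).
  rewrite /next_depth; case: ifP => h; last by rewrite hud.
  by rewrite hud ltnW // ltnS inv_depth_le.
Qed.

(* With the potential at m = d, the expansion inequality shows that the
   fresh level outweighs the whole current tree. *)
Lemma ball_le_fresh : #|ball st d| + reserve next_state <= 2 * #|fresh|.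
Proof.
have hc := level_expansion.
have := inv_potential (leqnn d); rewrite subnn !expn0 !mul1n.
lia.
Qed.

(* The potential inequality at level d + 1: for m = d + 1 it is
   [ball_le_fresh], below it follows from the level-d potential. *)
Lemma next_potential m : m <= d.+1 ->
  3 ^ (d.+1 - m) * #|ball next_state m| + 2 ^ (d.+1 - m) * reserve next_state
    <= 2 ^ (d.+1 - m) * (3 * #|level_set next_state d.+1|).
Proof.
rewrite next_level_top => hm; case: (eqVneq m d.+1) => [-> | hne].
  by rewrite subnn !expn0 !mul1n next_ball_top; have := ball_le_fresh; lia.
have hmd : m <= d by lia.
rewrite next_ball_old // subSn // !expnS.
have := inv_potential hmd; move: (3 ^ (d - m)) (2 ^ (d - m)) => X Y h.
by have := potential_arith h level_expansion; rewrite mulnA [2 * Y * _]mulnAC; nia.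
Qed.

Lemma next_growth : 3 ^ d.+1 <= 2 ^ d.+1 * #|ball next_state d.+1|.
Proof.
rewrite next_ball_top !expnS.
have h2 : #|ball st d| <= 2 * #|fresh| by have := ball_le_fresh; lia.
have := inv_growth; move: (3 ^ d) (2 ^ d) => X Y h.
by have := growth_arith h h2; nia.
Qed.

Lemma next_growth_inv : growth_inv next_state.
Proof.
split.
- exact: next_tree_ok.
- rewrite /= /next_special; case hs : (tspecial st) => [[f d1]|].
    exact: old_special_ok.
  by case: pickP => //= f hf; apply: unchosen_special_ok.
- exact: next_closed.
- exact: next_potential.
- exact: next_growth.
Qed.

End OneSpecial.

Lemma growth_step : small_conflict_subgraph ends w beta \/
  exists st2, growth_inv st2 /\ tlevel st2 = d.+1.
Proof.
case: (boolP at_most_one_special) => hone; last by left; apply: two_specials_extract.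
by right; exists next_state; split; [exact: next_growth_inv |].
Qed.

End Step.

Definition init_state : bfs_state := BfsState [set r] (fun _ => 0) (fun _ => e0) None 0.

Lemma init_ball k : ball init_state k = [set r].
Proof. by apply/setP => x; rewrite in_ball /= andbT. Qed.

Lemma init_level : level_set init_state 0 = [set r].
Proof. by apply/setP => x; rewrite in_level_set /= andbT. Qed.

Lemma init_growth_inv : growth_inv init_state.
Proof.
split => //=.
- split => //=; first by rewrite inE.
  + by move=> x; rewrite inE => /eqP ->; rewrite eqxx.
  + by move=> x; rewrite inE => /eqP ->; rewrite eqxx.
- by move=> m; rewrite leqn0 => /eqP ->; rewrite init_ball init_level cards1 /reserve.
- by rewrite init_ball cards1.
Qed.

Lemma growth_reach d : small_conflict_subgraph ends w beta \/
  exists st, growth_inv st /\ tlevel st = d.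
Proof.
elim: d => [|d [IH | [st [hst hd]]]]; last exact: growth_step hst hd.
- by right; exists init_state; split; [exact: init_growth_inv |].
- by left.
Qed.

(* The process cannot reach level |V|, since (3/2)^|V| > |V|. *)
Lemma small_conflict_subgraph_exists : 0 < #|V| -> small_conflict_subgraph ends w beta.
Proof.
move=> hV; case: (growth_reach #|V|) => // [[st [hst hd]]].
by have := growth_bound_n hst hd; rewrite leqNgt (pow32_gt_n hV).
Qed.

End Growth.

Theorem corollary6 (V E : finType) (ends : E -> V * V)
  (Sigma : eqType) (w : E -> seq Sigma) (gamma : nat) (beta : nat) :
  loopless ends ->
  0 < #|V| ->
  (forall v : V, 3 <= degree ends v) ->
  1 <= gamma ->
  (forall e, size (undup (w e)) <= gamma) ->
  (forall s : Sigma, #|[set e | s \in w e]| <= gamma) ->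
  (* beta = ceil(log_{3/2}(12 gamma^2)), i.e. the least b with (3/2)^b >= 12 gamma^2 *)
  12 * gamma ^ 2 * 2 ^ beta <= 3 ^ beta ->
  (forall b, 12 * gamma ^ 2 * 2 ^ b <= 3 ^ b -> beta <= b) ->
  exists (V0 : {set V}) (E0 : {set E}) (B : seq {set V}),
    is_subgraph ends V0 E0 /\
        path_decomposition ends V0 E0 B /\
        width_at_most B (4 * (beta + 3)) /\
        (* (a) *) #|E0| = #|V0| + 1 /\
        (* (b) |V0| <= 4 (log_{3/2} n + 2)  <=>  (3/2)^|V0| <= (3/2)^8 n^4 *)
        3 ^ #|V0| * 2 ^ 8 <= 3 ^ 8 * 2 ^ #|V0| * #|V| ^ 4 /\
        (* (c) *)
        (forall e1 e2, e1 \in E0 -> e2 \in E0 ->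
           has (fun s => s \in w e2) (w e1) ->
           exists2 b, b \in B &
             (edge_ends_set ends e1 :|: edge_ends_set ends e2) \subset b) /\
        (* (d) *)
        (forall e, e \in E0 -> indices_interval B (edge_ends_set ends e)).
Proof.
(* Grow the tree from any root r; some edge at r (deg r >= 3) serves as
   the default edge e0. *)
move=> hloop hV hdeg hgam hwe hws hbeta _.
have [r _] := card_gt0P hV.
have [e0 _] : exists e0, e0 \in [set e | incident ends r e].
  by apply/card_gt0P; apply: leq_trans (hdeg r).
exact: (small_conflict_subgraph_exists r e0 hloop hdeg hwe hws hbeta hgam hV).
Qed.
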